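(* Let $r,\sigma,s,c,\lambda,a>0$ with $a<\lambda$ and $1-\lambda r>0$, and let $\theta=\sqrt{2r/\sigma^2}$. Let $C_{11},C_{12}\in\mathbb{R}$ and $\bar x_1<x_1^*<\bar x_2$ be such that, with $\varphi_1(x)=C_{11}e^{\theta x}+C_{12}e^{-\theta x}+\frac{x-s}{r}$, $$\varphi_1'(x_1^* )=\lambda,\ \ \varphi_1''(x_1^* )\le0,\ \ \varphi_1'(\bar x_1)=\lambda,\ \ \varphi_1(\bar x_1)=\varphi_1(x_1^* )-c-\lambda(x_1^*-\bar x_1),\ \ \varphi_1(\bar x_2)=a\bar x_2 .$$ Define $$W_1(x)=\begin{cases}ax & x\ge\bar x_2\\ \varphi_1(x) & \bar x_1<x<\bar x_2\\ \varphi_1(x_1^* )-c-\lambda(x_1^*-x) & x\le\bar x_1,\end{cases}$$ and, for $x\in\mathbb{R}$, $\mathcal{M}W_1(x)=\sup_{\delta\ge0}\{W_1(x+\delta)-c-\lambda\delta\}$. Then for each $x\in\mathbb{R}$ the maximizer over $\delta\ge0$ of $W_1(x+\delta)-c-\lambda\delta$ is unique and equals $$\delta(x)=(x_1^*-x)\mathbf{1}_{(-\infty,x_1^*]}(x),$$ and moreover $$\{x:\mathcal{M}W_1(x)-W_1(x)<0\}=(\bar x_1,\infty),\qquad \{x:\mathcal{M}W_1(x)-W_1(x)=0\}=(-\infty,\bar x_1].$$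
   Context: This is the candidate equilibrium payoff of player P1 in a linear impulse controller–stopper game: state $X_t=x+\sigma W_t+\sum_{\tau_n\le t}\delta_n$, P1 pays $c+\lambda|\delta|$ per impulse $\delta\ge0$, and receives running payoff $x-s$ and terminal payoff $ax$, all discounted at rate $r$. *)

From Stdlib Require Import Reals Lra.
From Coquelicot Require Import Coquelicot.
Open Scope R_scope.

Definition theta (r sigma : R) : R := sqrt (2 * r / sigma ^ 2).

Definition phi1 (r sigma s C11 C12 : R) (x : R) : R :=
  C11 * exp (theta r sigma * x) + C12 * exp (- (theta r sigma * x)) + (x - s) / r.

Definition W1 (r sigma s c lambda a C11 C12 xb1 xs1 xb2 : R) (x : R) : R :=
  if Rle_dec xb2 x then a * x
  else if Rlt_dec xb1 x then phi1 r sigma s C11 C12 x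
  else phi1 r sigma s C11 C12 xs1 - c - lambda * (xs1 - x).

Definition impulse_obj (W : R -> R) (c lambda x delta : R) : R :=
  W (x + delta) - c - lambda * delta.

Definition MW (W : R -> R) (c lambda x : R) : Rbar :=
  Lub_Rbar (fun y => exists delta, 0 <= delta /\ y = impulse_obj W c lambda x delta).

Definition delta_opt (xs1 x : R) : R :=
  if Rle_dec x xs1 then xs1 - x else 0.

(** With [u = exp (theta y)], [(phi1' y - lambda) u] is a quadratic in [u] whose
    roots are [exp (theta xb1)] and [exp (theta xs1)]; its linear coefficient
    [1/r - lambda] is positive, which forces it to open downwards.  Hence
    [V y := W1 y - lambda y] is constant on [(-oo, xb1]], strictly increasing on
    [[xb1, xs1]] and strictly decreasing on [[xs1, +oo)] (on [[xb2, +oo)] because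
    [a < lambda]).  Since the objective is [V (x + delta) + lambda x - c], the
    unique maximizer moves [x] to [xs1] when [x <= xs1] and does nothing
    otherwise, and [M W1 x - W1 x = V (x + delta x) - V x - c] is [0] exactly
    when [x <= xb1]. *)
From Stdlib Require Import Reals Lra.
From Coquelicot Require Import Coquelicot.
Open Scope R_scope.

Lemma theta_pos r sigma : 0 < r -> 0 < sigma -> 0 < theta r sigma.
Proof.
  intros Hr Hsigma; apply sqrt_lt_R0, Rdiv_lt_0_compat; [lra | apply pow_lt; lra].
Qed.

Lemma quadratic_sign_between_roots p m n u1 u2 u :
  0 < m -> 0 < u1 -> u1 < u2 ->
  p * u1 ^ 2 + m * u1 + n = 0 -> p * u2 ^ 2 + m * u2 + n = 0 ->
  (u1 < u < u2 -> 0 < p * u ^ 2 + m * u + n) /\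
  (u2 < u -> p * u ^ 2 + m * u + n < 0).
Proof.
  intros Hm Hu1 Hu12 E1 E2.
  assert (Hm' : m = - (p * (u1 + u2))).
  { assert (Hfac : (u2 - u1) * (p * (u1 + u2) + m) = 0).
    { transitivity ((p * u2 ^ 2 + m * u2 + n) - (p * u1 ^ 2 + m * u1 + n)); [ring | lra]. }
    destruct (Rmult_integral _ _ Hfac); lra. }
  assert (Hp : p < 0) by nra.
  assert (Hn : n = p * u1 * u2).
  { transitivity (- (p * u1 ^ 2 + m * u1) + (p * u1 ^ 2 + m * u1 + n)); [ring |].
    rewrite E1, Hm'; ring. }
  assert (Hq : p * u ^ 2 + m * u + n = p * (u - u1) * (u - u2)) by (rewrite Hn, Hm'; ring).
  rewrite Hq; split; intros Hu.
  - assert (0 < (u - u1) * (u2 - u)) by (apply Rmult_lt_0_compat; lra); nra.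
  - assert (0 < (u - u1) * (u - u2)) by (apply Rmult_lt_0_compat; lra); nra.
Qed.

Lemma lt_of_derive_pos (f f' : R -> R) a b : a < b ->
  (forall z, a <= z <= b -> is_derive f z (f' z)) ->
  (forall z, a < z < b -> 0 < f' z) -> f a < f b.
Proof.
  intros Hab Hf Hpos.
  destruct (MVT_cor2 f f' a b Hab (fun z Hz => proj1 (is_derive_Reals _ _ _) (Hf z Hz)))
    as [z [Ez Hz]].
  specialize (Hpos z Hz); nra.
Qed.

Lemma lt_of_derive_neg (f f' : R -> R) a b : a < b ->
  (forall z, a <= z <= b -> is_derive f z (f' z)) ->
  (forall z, a < z < b -> f' z < 0) -> f b < f a.
Proof.
  intros Hab Hf Hneg.
  enough (- f a < - f b) by lra.
  apply (lt_of_derive_pos (fun y => - f y) (fun y => - f' y)); auto.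
  - intros z Hz; apply (is_derive_opp f), Hf, Hz.
  - intros z Hz; specialize (Hneg z Hz); lra.
Qed.

Lemma Lub_Rbar_attained (E : R -> Prop) m :
  E m -> (forall y, E y -> y <= m) -> Lub_Rbar E = Finite m.
Proof.
  intros Hm Hub; apply is_lub_Rbar_unique; split.
  - intros y Hy; apply Hub, Hy.
  - intros b Hb; apply Hb, Hm.
Qed.

Definition net_value (W : R -> R) (lambda y : R) : R := W y - lambda * y.

Lemma impulse_objE W c lambda x d :
  impulse_obj W c lambda x d = net_value W lambda (x + d) + lambda * x - c.
Proof. unfold impulse_obj, net_value; ring. Qed.

Lemma delta_opt_ge0 xs x : 0 <= delta_opt xs x.
Proof. unfold delta_opt; destruct (Rle_dec x xs); lra. Qed.

Section ImpulseArgmax.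

Variables (W : R -> R) (c lambda xs : R).
Notation V := (net_value W lambda).
Hypothesis V_lt_max : forall y, y <> xs -> V y < V xs.
Hypothesis V_decr : forall y1 y2, xs <= y1 -> y1 < y2 -> V y2 < V y1.

Lemma impulse_obj_lt_delta_opt x d : 0 <= d -> d <> delta_opt xs x ->
  impulse_obj W c lambda x d < impulse_obj W c lambda x (delta_opt xs x).
Proof.
  rewrite !impulse_objE; unfold delta_opt; intros Hd Hneq; destruct (Rle_dec x xs).
  - replace (x + (xs - x)) with xs by ring; enough (V (x + d) < V xs) by lra.
    apply V_lt_max; lra.
  - rewrite Rplus_0_r; enough (V (x + d) < V x) by lra.
    apply V_decr; lra.
Qed.

Lemma impulse_obj_le_delta_opt x d : 0 <= d ->
  impulse_obj W c lambda x d <= impulse_obj W c lambda x (delta_opt xs x).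
Proof.
  intros Hd; destruct (Req_dec d (delta_opt xs x)) as [-> | Hneq]; [lra |].
  now apply Rlt_le, impulse_obj_lt_delta_opt.
Qed.

Lemma impulse_obj_argmax_unique x d : 0 <= d ->
  (forall d', 0 <= d' -> impulse_obj W c lambda x d' <= impulse_obj W c lambda x d) ->
  d = delta_opt xs x.
Proof.
  intros Hd Hmax; destruct (Req_dec d (delta_opt xs x)) as [| Hneq]; [assumption |].
  pose proof (impulse_obj_lt_delta_opt x d Hd Hneq).
  pose proof (Hmax _ (delta_opt_ge0 xs x)); lra.
Qed.

Lemma MW_delta_opt x :
  MW W c lambda x = Finite (impulse_obj W c lambda x (delta_opt xs x)).
Proof.
  apply Lub_Rbar_attained.
  - exists (delta_opt xs x); split; [apply delta_opt_ge0 | reflexivity].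
  - intros y [d [Hd ->]]; now apply impulse_obj_le_delta_opt.
Qed.

End ImpulseArgmax.

Definition dphi1 (r sigma C11 C12 y : R) : R :=
  theta r sigma * (C11 * exp (theta r sigma * y) - C12 * exp (- (theta r sigma * y))) + / r.

Lemma is_derive_phi1 r sigma s C11 C12 y : r <> 0 ->
  is_derive (phi1 r sigma s C11 C12) y (dphi1 r sigma C11 C12 y).
Proof. intros Hr; unfold phi1, dphi1; auto_derive; [auto | field; auto]. Qed.

Section Phi1Shape.

Variables (r sigma s C11 C12 lambda xb1 xs1 : R).
Hypotheses (Hr : 0 < r) (Hsigma : 0 < sigma) (Hlr : 0 < 1 - lambda * r).
Hypothesis Hx1 : xb1 < xs1.
Hypotheses (Dxb1 : dphi1 r sigma C11 C12 xb1 = lambda)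
  (Dxs1 : dphi1 r sigma C11 C12 xs1 = lambda).

Let t := theta r sigma.

Lemma dphi1_sub_mul_exp y :
  (dphi1 r sigma C11 C12 y - lambda) * exp (t * y)
  = t * C11 * exp (t * y) ^ 2 + (/ r - lambda) * exp (t * y) + - (t * C12).
Proof.
  assert (Hinv : exp (- (t * y)) * exp (t * y) = 1).
  { rewrite <- exp_plus; replace (- (t * y) + t * y) with 0 by ring; apply exp_0. }
  unfold dphi1; fold t.
  rewrite <- (Rmult_1_r (t * C12)), <- Hinv; ring.
Qed.

Lemma dphi1_sign y :
  (xb1 < y < xs1 -> lambda < dphi1 r sigma C11 C12 y) /\
  (xs1 < y -> dphi1 r sigma C11 C12 y < lambda).
Proof.
  assert (Ht : 0 < t) by exact (theta_pos r sigma Hr Hsigma).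
  assert (Hexp : forall y1 y2, y1 < y2 -> exp (t * y1) < exp (t * y2))
    by (intros; apply exp_increasing; nra).
  assert (Hm : 0 < / r - lambda).
  { apply (Rmult_lt_reg_r r); [lra |]; rewrite Rmult_minus_distr_r, Rinv_l; lra. }
  assert (Hroot : forall z, dphi1 r sigma C11 C12 z = lambda ->
    t * C11 * exp (t * z) ^ 2 + (/ r - lambda) * exp (t * z) + - (t * C12) = 0).
  { intros z Ez; pose proof (dphi1_sub_mul_exp z) as E.
    rewrite Ez, Rminus_diag, Rmult_0_l in E; lra. }
  destruct (quadratic_sign_between_roots (t * C11) (/ r - lambda) (- (t * C12))
    (exp (t * xb1)) (exp (t * xs1)) (exp (t * y)) Hm (exp_pos _) (Hexp _ _ Hx1)
    (Hroot _ Dxb1) (Hroot _ Dxs1)) as [Hmid Hright].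
  pose proof (dphi1_sub_mul_exp y) as E; pose proof (exp_pos (t * y)).
  split; intros Hy.
  - assert (0 < t * C11 * exp (t * y) ^ 2 + (/ r - lambda) * exp (t * y) + - (t * C12))
      by (apply Hmid; split; apply Hexp; lra).
    nra.
  - assert (t * C11 * exp (t * y) ^ 2 + (/ r - lambda) * exp (t * y) + - (t * C12) < 0)
      by (apply Hright, Hexp; lra).
    nra.
Qed.

Let psi := net_value (phi1 r sigma s C11 C12) lambda.

Lemma is_derive_net_value_phi1 y : is_derive psi y (dphi1 r sigma C11 C12 y - lambda).
Proof.
  apply (is_derive_minus (phi1 r sigma s C11 C12) (fun y => lambda * y)).
  - apply is_derive_phi1; lra.
  - auto_derive; auto; ring.
Qed.

Lemma net_value_phi1_increasing y1 y2 : xb1 <= y1 -> y1 < y2 -> y2 <= xs1 ->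
  psi y1 < psi y2.
Proof.
  intros H1 H12 H2.
  apply (lt_of_derive_pos psi (fun z => dphi1 r sigma C11 C12 z - lambda) _ _ H12).
  - intros z _; apply is_derive_net_value_phi1.
  - intros z Hz; enough (lambda < dphi1 r sigma C11 C12 z) by lra.
    apply dphi1_sign; lra.
Qed.

Lemma net_value_phi1_decreasing y1 y2 : xs1 <= y1 -> y1 < y2 -> psi y2 < psi y1.
Proof.
  intros H1 H12.
  apply (lt_of_derive_neg psi (fun z => dphi1 r sigma C11 C12 z - lambda) _ _ H12).
  - intros z _; apply is_derive_net_value_phi1.
  - intros z Hz; enough (dphi1 r sigma C11 C12 z < lambda) by lra.
    apply dphi1_sign; lra.
Qed.

End Phi1Shape.

Section ValueFunction.

Variables (r sigma s c lambda a C11 C12 xb1 xs1 xb2 : R).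
Hypotheses (Hr : 0 < r) (Hsigma : 0 < sigma) (Hc : 0 < c) (Hal : a < lambda)
  (Hlr : 0 < 1 - lambda * r).
Hypotheses (Hx1 : xb1 < xs1) (Hx2 : xs1 < xb2).
Hypotheses (Dxb1 : dphi1 r sigma C11 C12 xb1 = lambda)
  (Dxs1 : dphi1 r sigma C11 C12 xs1 = lambda).
Let phi := phi1 r sigma s C11 C12.
Hypotheses (Exb1 : phi xb1 = phi xs1 - c - lambda * (xs1 - xb1))
  (Exb2 : phi xb2 = a * xb2).

Let W := W1 r sigma s c lambda a C11 C12 xb1 xs1 xb2.
Let V := net_value W lambda.
Let psi := net_value phi lambda.
Let psi_increasing := net_value_phi1_increasing r sigma s C11 C12 lambda xb1 xs1
  Hr Hsigma Hlr Hx1 Dxb1 Dxs1.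
Let psi_decreasing := net_value_phi1_decreasing r sigma s C11 C12 lambda xb1 xs1
  Hr Hsigma Hlr Hx1 Dxb1 Dxs1.

Lemma net_W1_le_xb1 y : y <= xb1 -> V y = V xs1 - c.
Proof.
  intros Hy; unfold V, net_value, W, W1; fold phi.
  destruct (Rle_dec xb2 y); [lra |]; destruct (Rlt_dec xb1 y); [lra |].
  destruct (Rle_dec xb2 xs1); [lra |]; destruct (Rlt_dec xb1 xs1); [ring | lra].
Qed.

Lemma net_W1_between y : xb1 < y < xb2 -> V y = psi y.
Proof.
  intros Hy; unfold V, psi, net_value, W, W1; fold phi.
  destruct (Rle_dec xb2 y); [lra |]; destruct (Rlt_dec xb1 y); [ring | lra].
Qed.

Lemma net_W1_ge_xb2 y : xb2 <= y -> V y = (a - lambda) * y.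
Proof. intros Hy; unfold V, net_value, W, W1; destruct (Rle_dec xb2 y); [ring | lra]. Qed.

Lemma net_W1_decreasing y1 y2 : xs1 <= y1 -> y1 < y2 -> V y2 < V y1.
Proof.
  intros H1 H12.
  destruct (Rle_dec xb2 y1); [rewrite !net_W1_ge_xb2 by lra; nra |].
  rewrite (net_W1_between y1) by lra.
  destruct (Rle_dec xb2 y2).
  - rewrite net_W1_ge_xb2 by lra.
    replace ((a - lambda) * y2) with (psi xb2 + (a - lambda) * (y2 - xb2))
      by (unfold psi, net_value; rewrite Exb2; ring).
    assert (psi xb2 < psi y1) by (apply psi_decreasing; lra).
    nra.
  - rewrite net_W1_between by lra; apply psi_decreasing; lra.
Qed.

Lemma net_W1_gt_max_sub_c y : xb1 < y <= xs1 -> V xs1 - c < V y.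
Proof.
  intros Hy; rewrite (net_W1_between y), (net_W1_between xs1) by lra.
  replace (psi xs1 - c) with (psi xb1) by (unfold psi, net_value; rewrite Exb1; ring).
  apply psi_increasing; lra.
Qed.

Lemma net_W1_lt_max y : y <> xs1 -> V y < V xs1.
Proof.
  intros Hy; destruct (Rle_dec y xb1) as [Hle | Hgt].
  - rewrite net_W1_le_xb1; lra.
  - destruct (Rlt_dec y xs1).
    + rewrite (net_W1_between y), (net_W1_between xs1) by lra.
      apply psi_increasing; lra.
    + apply net_W1_decreasing; lra.
Qed.

Lemma MW_W1E x :
  MW W c lambda x = Finite (W x + (V (x + delta_opt xs1 x) - V x - c)).
Proof.
  rewrite (MW_delta_opt W c lambda xs1 net_W1_lt_max net_W1_decreasing), impulse_objE.
  unfold V, net_value; f_equal; ring.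
Qed.

Lemma MW_gap_neg x : xb1 < x -> V (x + delta_opt xs1 x) - V x - c < 0.
Proof.
  intros Hx; unfold delta_opt; destruct (Rle_dec x xs1).
  - replace (x + (xs1 - x)) with xs1 by ring.
    pose proof (net_W1_gt_max_sub_c x ltac:(lra)); lra.
  - rewrite Rplus_0_r; lra.
Qed.

Lemma MW_gap_zero x : x <= xb1 -> V (x + delta_opt xs1 x) - V x - c = 0.
Proof.
  intros Hx; unfold delta_opt; destruct (Rle_dec x xs1); [| lra].
  replace (x + (xs1 - x)) with xs1 by ring; rewrite (net_W1_le_xb1 x) by lra; ring.
Qed.

Lemma MW_lt_W1_iff x : Rbar_lt (MW W c lambda x) (W x) <-> xb1 < x.
Proof.
  rewrite MW_W1E; simpl; split; intros Hx.
  - destruct (Rle_lt_dec x xb1) as [Hle | Hgt]; [| exact Hgt].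
    pose proof (MW_gap_zero x Hle); lra.
  - pose proof (MW_gap_neg x Hx); lra.
Qed.

Lemma MW_eq_W1_iff x : MW W c lambda x = Finite (W x) <-> x <= xb1.
Proof.
  rewrite MW_W1E; split; intros Hx.
  - injection Hx as Hx; destruct (Rle_lt_dec x xb1) as [Hle | Hgt]; [exact Hle |].
    pose proof (MW_gap_neg x Hgt); lra.
  - rewrite (MW_gap_zero x Hx); f_equal; ring.
Qed.

End ValueFunction.

Theorem lemmaA1 (r sigma s c lambda a C11 C12 xb1 xs1 xb2 : R) :
  0 < r -> 0 < sigma -> 0 < s -> 0 < c -> 0 < lambda -> 0 < a ->
  a < lambda -> 0 < 1 - lambda * r ->
  xb1 < xs1 -> xs1 < xb2 ->
  Derive (phi1 r sigma s C11 C12) xs1 = lambda ->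
  Derive_n (phi1 r sigma s C11 C12) 2 xs1 <= 0 ->
  Derive (phi1 r sigma s C11 C12) xb1 = lambda ->
  phi1 r sigma s C11 C12 xb1
    = phi1 r sigma s C11 C12 xs1 - c - lambda * (xs1 - xb1) ->
  phi1 r sigma s C11 C12 xb2 = a * xb2 ->
  let W := W1 r sigma s c lambda a C11 C12 xb1 xs1 xb2 in
  (forall x : R,
      0 <= delta_opt xs1 x /\
      (forall d, 0 <= d ->
         impulse_obj W c lambda x d <= impulse_obj W c lambda x (delta_opt xs1 x)) /\
      (forall d, 0 <= d ->
         (forall d', 0 <= d' -> impulse_obj W c lambda x d' <= impulse_obj W c lambda x d) ->
         d = delta_opt xs1 x)) /\
  (forall x : R, Rbar_lt (MW W c lambda x) (Finite (W x)) <-> xb1 < x) /\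
  (forall x : R, MW W c lambda x = Finite (W x) <-> x <= xb1).
Proof.
  intros Hr Hsigma _ Hc _ _ Hal Hlr Hx1 Hx2 Dxs1 _ Dxb1 Exb1 Exb2 W.
  rewrite (is_derive_unique _ _ _ (is_derive_phi1 r sigma s C11 C12 xs1 ltac:(lra))) in Dxs1.
  rewrite (is_derive_unique _ _ _ (is_derive_phi1 r sigma s C11 C12 xb1 ltac:(lra))) in Dxb1.
  pose proof (net_W1_lt_max r sigma s c lambda a C11 C12 xb1 xs1 xb2) as Vmax.
  pose proof (net_W1_decreasing r sigma s c lambda a C11 C12 xb1 xs1 xb2) as Vdecr.
  split; [| split]; intros x.
  - split; [apply delta_opt_ge0 | split].
    + apply (impulse_obj_le_delta_opt W c lambda xs1); auto.
    + apply (impulse_obj_argmax_unique W c lambda xs1); auto.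
  - apply (MW_lt_W1_iff r sigma s c lambda a C11 C12 xb1 xs1 xb2); assumption.
  - apply (MW_eq_W1_iff r sigma s c lambda a C11 C12 xb1 xs1 xb2); assumption.
Qed.
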